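(* Let $D$ be an integral domain and let $T$ be a $t$-Jaffard overring of $D$. Then for every fractional ideal $I$ of $D$ we have $(D:I)T=(T:IT)$.
   Context: $K$ is the quotient field of $D$; an overring is a ring between $D$ and $K$, flat if flat as a $D$-module. For $D$-submodules, $(A:B)=\{x\in K\mid xB\subseteq A\}$. A family $\Theta$ of overrings of $D$ is a $t$-Jaffard family if: either $\Theta=\{K\}$ or $K\notin\Theta$; every $T\in\Theta$ is flat over $D$; $\Theta$ is independent ($TT'=K$ for distinct $T,T'\in\Theta$); $\Theta$ is locally finite (every nonzero $x\in D$ is a nonunit in only finitely many $T\in\Theta$); and $\bigcap_{T\in\Theta}T=D$. A $t$-Jaffard overring is a member of some $t$-Jaffard family of $D$. *)

From mathcomp Require Import all_boot all_order all_algebra.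
Set Implicit Arguments. Unset Strict Implicit. Unset Printing Implicit Defensive.
Import GRing.Theory.
Local Open Scope ring_scope.

Section Defs.
Variable K : fieldType.

Definition same_set (A B : K -> Prop) : Prop := forall x, A x <-> B x.

Definition is_subring (R : K -> Prop) : Prop :=
  [/\ R 0, R 1,
      (forall x y, R x -> R y -> R (x - y)) &
      (forall x y, R x -> R y -> R (x * y))].

(* D is a (necessarily integral) domain whose quotient field is K *)
Definition domain_with_qf (D : K -> Prop) : Prop :=
  is_subring D /\
  forall x, exists a b, [/\ D a, D b, b != 0 & x = a / b].

Definition overring (D T : K -> Prop) : Prop :=
  is_subring T /\ forall x, D x -> T x.

Definition submodule (D A : K -> Prop) : Prop :=
  [/\ A 0, (forall x y, A x -> A y -> A (x + y)) &
      (forall d x, D d -> A x -> A (d * x))].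

Definition colon (A B : K -> Prop) : K -> Prop :=
  fun x => forall b, B b -> A (x * b).

Definition prodset (A B : K -> Prop) : K -> Prop :=
  fun x => exists n (a b : 'I_n -> K),
    [/\ forall i, A (a i), forall i, B (b i) & x = \sum_(i < n) a i * b i].

Definition fractional_ideal (D I : K -> Prop) : Prop :=
  [/\ submodule D I, (exists x, I x /\ x != 0) &
      exists d, [/\ D d, d != 0 & forall x, I x -> D (d * x)]].

(* flatness of the D-module T (T ⊆ K), via the equational criterion of flatness *)
Definition flat_over (D T : K -> Prop) : Prop :=
  forall n (a x : 'I_n -> K),
    (forall i, D (a i)) -> (forall i, T (x i)) ->
    \sum_(i < n) a i * x i = 0 ->
    exists m (b : 'I_n -> 'I_m -> K) (y : 'I_m -> K),
      [/\ forall i j, D (b i j), forall j, T (y j),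
          forall i, x i = \sum_(j < m) b i j * y j &
          forall j, \sum_(i < n) a i * b i j = 0].

Definition unit_in (T : K -> Prop) (x : K) : Prop := exists y, T y /\ x * y = 1.

Definition t_Jaffard_family (D : K -> Prop) (Th : (K -> Prop) -> Prop) : Prop :=
  (forall T, Th T -> overring D T) /\
  [/\
      ((exists T, Th T) /\ (forall T, Th T -> same_set T (fun _ => True)))
        \/ (forall T, Th T -> ~ same_set T (fun _ => True)),
      (forall T, Th T -> flat_over D T),
      (forall T T', Th T -> Th T' -> ~ same_set T T' -> same_set (prodset T T') (fun _ => True)),
      (forall x, D x -> x != 0 -> exists n (S : 'I_n -> (K -> Prop)),
          forall T, Th T -> ~ unit_in T x -> exists i, same_set T (S i)) &
      (forall x, (forall T, Th T -> T x) <-> D x)].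

Definition t_Jaffard_overring (D T : K -> Prop) : Prop :=
  exists Th, t_Jaffard_family D Th /\ Th T.

End Defs.

From mathcomp Require Import all_boot all_order all_algebra.
From Stdlib Require Import Classical.
Set Implicit Arguments. Unset Strict Implicit. Unset Printing Implicit Defensive.
Import GRing.Theory.
Local Open Scope ring_scope.

(* Let T^c be the intersection of the members of the family other than T.
   The key fact is T^c T = K: for 0 <> q in D, independence and local
   finiteness give finitely many g in D with q^-1 g in T whose span G satisfies
   G T' = T' for every other member T'; flatness of T then puts q^-1 in
   (D : G) T, and (D : G) is contained in T^c.  Given x in (T : IT), choose
   d <> 0 with dI in D; writing x = d (x / d) shows x in (T^c : I) T.
   Flatness of T gives A T ∩ x T = (A ∩ D x) T, so x lies in
   ((T^c : I) ∩ (T : I)) T, and (T^c : I) ∩ (T : I) = (D : I) because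
   the family intersects to D. *)

Section Subring.
Variables (K : fieldType) (R : K -> Prop).
Hypothesis sR : is_subring R.

Lemma subring0 : R 0. Proof. by case: sR. Qed.

Lemma subring1 : R 1. Proof. by case: sR. Qed.

Lemma subringB x y : R x -> R y -> R (x - y).
Proof. by case: sR => _ _ RB _; apply: RB. Qed.

Lemma subringN x : R x -> R (- x).
Proof. by rewrite -sub0r; apply/subringB/subring0. Qed.

Lemma subringD x y : R x -> R y -> R (x + y).
Proof. by move=> Rx Ry; rewrite -[y]opprK; apply/subringB/subringN. Qed.

Lemma subringM x y : R x -> R y -> R (x * y).
Proof. by case: sR => _ _ _; apply. Qed.

Lemma subring_sum n (f : 'I_n -> K) : (forall i, R (f i)) -> R (\sum_(i < n) f i).
Proof. by move=> Rf; apply: big_ind => //; [apply: subring0 | apply: subringD]. Qed.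

Lemma submodule_subring (D : K -> Prop) :
  (forall x, D x -> R x) -> submodule D R.
Proof.
by move=> DR; split; [apply: subring0 | apply: subringD | move=> d x /DR; apply: subringM].
Qed.

Lemma submodule_colon (D B : K -> Prop) :
  (forall x, D x -> R x) -> submodule D (colon R B).
Proof.
move=> DR; split.
- by move=> b _; rewrite mul0r; apply: subring0.
- by move=> x y Rx Ry b Bb; rewrite mulrDl; apply: subringD; [apply: Rx | apply: Ry].
- by move=> d x /DR Rd Rx b Bb; rewrite -mulrA; apply: subringM => //; apply: Rx.
Qed.

End Subring.

Section Submodule.
Variables (K : fieldType) (D : K -> Prop).

Lemma submodule_sum (A : K -> Prop) n (f : 'I_n -> K) :
  submodule D A -> (forall i, A (f i)) -> A (\sum_(i < n) f i).
Proof. by case=> A0 AD _ Af; apply: big_ind. Qed.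

Lemma submoduleI (A B : K -> Prop) :
  submodule D A -> submodule D B -> submodule D (fun x => A x /\ B x).
Proof.
case=> A0 AD AM [B0 BD BM]; split=> //.
- by move=> x y [Ax Bx] [Ay By]; split; [apply: AD | apply: BD].
- by move=> d x Dd [Ax Bx]; split; [apply: AM | apply: BM].
Qed.

End Submodule.

Section Prodset.
Variable K : fieldType.
Implicit Types A B D G I R S T : K -> Prop.

Lemma prodset_sub A A' B B' x :
  (forall a, A a -> A' a) -> (forall b, B b -> B' b) -> prodset A B x -> prodset A' B' x.
Proof.
move=> AA' BB' [n [a [b [Aa Bb ->]]]].
by exists n, a, b; split=> // i; [apply: AA' | apply: BB'].
Qed.

Lemma prodset_mul A B a b : A a -> B b -> prodset A B (a * b).
Proof.
by move=> Aa Bb; exists 1%N, (fun=> a), (fun=> b); split=> //; rewrite big_ord1.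
Qed.

Lemma prodset_mull A A' B c x :
  prodset A B x -> (forall a, A a -> A' (c * a)) -> prodset A' B (c * x).
Proof.
move=> [n [a [b [Aa Bb ->]]]] AA'; exists n, (fun i => c * a i), b; split=> // [i|].
  exact: AA'.
by rewrite mulr_sumr; apply: eq_bigr => i _; rewrite mulrA.
Qed.

Lemma prodset1_colon_sub R S G a :
  is_subring R -> (forall y, S y -> R y) -> prodset G R 1 -> colon S G a -> R a.
Proof.
move=> sR SR [n [g [v [Gg Rv E]]]] aSG.
rewrite -[a]mulr1 E mulr_sumr; apply: subring_sum => // j.
by rewrite mulrA; apply: subringM => //; apply/SR/aSG.
Qed.

Lemma prodset_colon_sub D T I :
  overring D T -> forall x, prodset (colon D I) T x -> colon T (prodset I T) x.
Proof.
move=> [sT DT] _ [n [a [u [aDI Tu ->]]]] _ [m [b [v [Ib Tv ->]]]].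
rewrite mulr_suml; apply: subring_sum => // i; rewrite mulr_sumr; apply: subring_sum => // j.
by rewrite mulrACA; apply: subringM => //; [apply/DT/aDI | apply: subringM].
Qed.

End Prodset.

Section Flat.
Variables (K : fieldType) (D : K -> Prop).
Hypothesis qfD : domain_with_qf D.
Implicit Types A B T : K -> Prop.

Let sD : is_subring D. Proof. by case: qfD. Qed.

Lemma common_denominator (s : seq K) :
  exists c, [/\ D c, c != 0 & forall y, y \in s -> D (c * y)].
Proof.
elim: s => [|y s [c [Dc c0 cD]]].
  by exists 1; split=> //; [apply: subring1 | rewrite oner_eq0].
have [a [b [Da Db b0 ->]]] := qfD.2 y.
exists (c * b); split; [exact: subringM | by rewrite mulf_neq0 |].
move=> z; rewrite inE => /predU1P [->|zs].
  by rewrite mulrAC -mulrA divfK //; apply: subringM.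
by rewrite mulrAC; apply: subringM => //; apply: cD.
Qed.

Lemma flat_over_cons T n a0 x0 (a x : 'I_n -> K) :
    flat_over D T -> D a0 -> T x0 -> (forall i, D (a i)) -> (forall i, T (x i)) ->
    a0 * x0 + \sum_(i < n) a i * x i = 0 ->
  exists m (b0 : 'I_m -> K) (b : 'I_n -> 'I_m -> K) (y : 'I_m -> K),
    [/\ forall j, D (b0 j) /\ forall i, D (b i j), forall j, T (y j),
        x0 = \sum_(j < m) b0 j * y j, forall i, x i = \sum_(j < m) b i j * y j &
        forall j, a0 * b0 j + \sum_(i < n) a i * b i j = 0].
Proof.
move=> flatT Da0 Tx0 Da Tx rel.
pose a' k := if unlift ord0 k is Some i then a i else a0.
pose x' k := if unlift ord0 k is Some i then x i else x0.
have [||| m [b [y [Db Ty x'E a'b0]]]] := flatT n.+1 a' x'.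
- by move=> k; rewrite /a'; case: unlift.
- by move=> k; rewrite /x'; case: unlift.
- by rewrite big_ord_recl /a' /x' unlift_none; under eq_bigr do rewrite liftK.
exists m, (b ord0), (fun i => b (lift ord0 i)), y; split=> //.
- by rewrite -x'E /x' unlift_none.
- by move=> i; rewrite -x'E /x' liftK.
- move=> j; have := a'b0 j; rewrite big_ord_recl /a' unlift_none.
  by under eq_bigr do rewrite liftK.
Qed.

Lemma flat_prodsetI T A B b t :
    flat_over D T -> submodule D A -> submodule D B -> B b -> T t ->
    prodset A T (b * t) -> prodset (fun y => A y /\ B y) T (b * t).
Proof.
move=> flatT sA sB Bb Tt [n [a [u [Aa Tu btE]]]].
have [c [Dc c0 cD]] := common_denominator (b :: [seq a i | i <- enum 'I_n]).
have Dcb : D (c * b) by apply: cD; rewrite mem_head.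
have Dca i : D (c * a i) by apply: cD; rewrite inE map_f ?mem_enum ?orbT.
have rel : - (c * b) * t + \sum_(i < n) (c * a i) * u i = 0.
  by under eq_bigr do rewrite -mulrA; rewrite -mulr_sumr -btE mulNr mulrA addNr.
have [m [b0 [bb [y [Db Ty tE uE relb]]]]] :=
  flat_over_cons flatT (subringN sD Dcb) Tt Dca Tu rel.
exists m, (fun j => b * b0 j), y; split=> // [j|]; last first.
  by rewrite tE mulr_sumr; apply: eq_bigr => j _; rewrite mulrA.
have [Db0 Dbb] := Db j; split; last by case: sB => _ _ BM; rewrite mulrC; apply: BM.
have -> : b * b0 j = \sum_(i < n) a i * bb i j.
  apply: (mulfI c0); rewrite mulrA mulr_sumr.
  under eq_bigr do rewrite mulrA.
  by apply/esym/eqP; rewrite -subr_eq0 -mulNr addrC relb.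
apply: (submodule_sum sA) => i; rewrite mulrC.
by case: sA => _ _ AM; apply: AM.
Qed.

Lemma flat_prodset_colon T A (G : seq K) y :
    flat_over D T -> submodule D A -> colon T (fun g => g \in G) y ->
    prodset A T y -> prodset (fun a => A a /\ colon D (fun g => g \in G) a) T y.
Proof.
move=> flatT sA; elim: G => [|g G IH] yGT yAT.
  by apply: prodset_sub yAT => // a Aa; split=> // g.
have {IH}yAGT : prodset (fun a => A a /\ colon D (fun g => g \in G) a) T y.
  by apply: IH => // h hG; apply: yGT; rewrite inE hG orbT.
have sAG := submoduleI sA (submodule_colon sD (fun g => g \in G) (fun _ => id)).
pose Dg := colon D (fun h => h = g).
have sDg : submodule D Dg by apply: submodule_colon.
have gAGT : prodset (fun a => (A a /\ colon D (fun g => g \in G) a) /\ Dg a) T y.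
  have [g0|g0] := eqVneq g 0.
    apply: prodset_sub yAGT => // a aAG; split=> // _ ->.
    by rewrite g0 mulr0; apply: subring0.
  (* y = g^-1 (g y) with g y in T *)
  rewrite -[y](mulKf g0); apply: flat_prodsetI => //.
  - by move=> _ ->; rewrite mulVf //; apply: subring1.
  - by rewrite mulrC; apply: yGT; rewrite mem_head.
  - by rewrite mulKf.
apply: prodset_sub gAGT => // a [[Aa aG] ag]; split=> // h.
by rewrite inE => /predU1P [->|/aG //]; apply: ag.
Qed.

Lemma prodset_den_ideal T (T1 : K -> Prop) z :
    overring D T -> overring D T1 -> flat_over D T1 -> prodset T T1 z ->
  exists G : seq K, (forall g, g \in G -> D g /\ T (z * g)) /\
    prodset (fun g => g \in G) T1 1.
Proof.
move=> [sT DT] [sT1 DT1] flatT1 [n [t [u [Tt T1u ->]]]].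
pose U := [seq u r | r <- enum 'I_n].
have [|||k [c [v [cDU T1v ->]]]] := @flat_prodset_colon T1 D U 1 flatT1.
- exact: submodule_subring.
- by move=> _ /mapP [r _ ->]; rewrite mul1r.
- by rewrite -[1]mulr1; apply: prodset_mul; [apply: subring1 | apply: subring1].
exists [seq c j | j <- enum 'I_k]; split; last first.
  by exists k, c, v; split=> // j; rewrite map_f ?mem_enum.
move=> _ /mapP [j _ ->]; have [Dc cDu] := cDU j; split=> //.
rewrite mulr_suml; apply: subring_sum => // r; rewrite -mulrA; apply: subringM => //.
by rewrite mulrC; apply/DT/cDu; rewrite map_f ?mem_enum.
Qed.

End Flat.

Section JaffardFamily.
Variables (K : fieldType) (D T : K -> Prop) (Th : (K -> Prop) -> Prop).
Hypothesis qfD : domain_with_qf D.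
Hypothesis Th_overring : forall T', Th T' -> overring D T'.
Hypothesis Th_flat : forall T', Th T' -> flat_over D T'.
Hypothesis Th_indep : forall T1 T2, Th T1 -> Th T2 -> ~ same_set T1 T2 ->
  same_set (prodset T1 T2) (fun _ => True).
Hypothesis Th_locfin : forall x, D x -> x != 0 ->
  exists n (S : 'I_n -> (K -> Prop)),
    forall T', Th T' -> ~ unit_in T' x -> exists i, same_set T' (S i).
Hypothesis Th_meet : forall x, (forall T', Th T' -> T' x) -> D x.
Hypothesis ThT : Th T.

Definition others_meet : K -> Prop :=
  fun x => forall T', Th T' -> ~ same_set T' T -> T' x.

Lemma sub_others_meet x : D x -> others_meet x.
Proof. by move=> Dx T' /Th_overring [_ DT'] _; apply: DT'. Qed.

Lemma others_meet_subring : is_subring others_meet.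
Proof.
split=> [T' /Th_overring [sT' _] _|T' /Th_overring [sT' _] _|x y ox oy|x y ox oy] /=.
- exact: subring0.
- exact: subring1.
- move=> T' ThT' neT'; have [sT' _] := Th_overring ThT'.
  by apply: subringB; [| apply: ox | apply: oy].
- move=> T' ThT' neT'; have [sT' _] := Th_overring ThT'.
  by apply: subringM; [| apply: ox | apply: oy].
Qed.

Lemma den_ideal_generates_others s : D s -> s != 0 ->
  exists G : seq K, (forall g, g \in G -> D g /\ T (s^-1 * g)) /\
    forall T', Th T' -> ~ same_set T' T -> prodset (fun g => g \in G) T' 1.
Proof.
move=> Ds s0; have [n [S nonunitS]] := Th_locfin Ds s0.
have /fin_all_exists [Gs GsP] : forall i : 'I_n, exists G : seq K,
    (forall g, g \in G -> D g /\ T (s^-1 * g)) /\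
    forall T', Th T' -> same_set T' (S i) -> ~ same_set T' T ->
      prodset (fun g => g \in G) T' 1.
  move=> i.
  have [[T1 [ThT1 eT1 neT1]]|none] :=
    classic (exists T1, [/\ Th T1, same_set T1 (S i) & ~ same_set T1 T]); last first.
    by exists [::]; split=> // T' ThT' eT' neT'; case: none; exists T'.
  have neTT1 : ~ same_set T T1 by move=> eTT1; apply: neT1 => z; split => /eTT1.
  have [G [GT GT1]] := prodset_den_ideal qfD (Th_overring ThT) (Th_overring ThT1)
    (Th_flat ThT1) ((Th_indep ThT ThT1 neTT1 s^-1).2 I).
  exists G; split=> // T' ThT' eT' neT'.
  by apply: prodset_sub GT1 => // z /eT1 /eT'.
(* s takes care of the members in which s is a unit. *)
exists (s :: flatten [seq Gs i | i <- enum 'I_n]); split.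
  move=> g; rewrite inE => /predU1P [->|/flatten_mapP [i _ /(GsP i).1 //]].
  split=> //; rewrite mulVf //; apply: subring1; exact: (Th_overring ThT).1.
move=> T' ThT' neT'; have [[w [T'w sw]]|nonunit] := classic (unit_in T' s).
  by rewrite -sw; apply: prodset_mul => //; rewrite mem_head.
have [i eT'] := nonunitS T' ThT' nonunit.
apply: prodset_sub ((GsP i).2 T' ThT' eT' neT') => // g gGi.
by rewrite inE; apply/predU1P; right; apply/flatten_mapP; exists i; rewrite ?mem_enum.
Qed.

Lemma prodset_others_meet x : prodset others_meet T x.
Proof.
have [sT _] := Th_overring ThT.
have [p [q [Dp Dq q0 ->]]] := qfD.2 x.
have [G [GT GT']] := den_ideal_generates_others Dq q0.
have qT : prodset (fun=> True) T q^-1.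
  by rewrite -[q^-1]mulr1; apply: prodset_mul => //; apply: subring1.
have qGT : colon T (fun g => g \in G) q^-1 by move=> g /GT [].
have sK : submodule D (fun=> True) by [].
have qoT : prodset others_meet T q^-1.
  apply: prodset_sub (flat_prodset_colon qfD (Th_flat ThT) sK qGT qT) => //.
  move=> a [_ aG] T' ThT' neT'; have [sT' DT'] := Th_overring ThT'.
  exact: prodset1_colon_sub sT' DT' (GT' T' ThT' neT') aG.
apply: (prodset_mull qoT) => a oa.
by apply: (subringM others_meet_subring) => //; apply: sub_others_meet.
Qed.

Lemma colon_others_meetI I z : colon others_meet I z -> colon T I z -> colon D I z.
Proof.
move=> zoI zTI i Ii; apply: Th_meet => T' ThT'.
have [eT'|neT'] := classic (same_set T' T); first by apply/eT'/zTI.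
exact: zoI.
Qed.

Lemma colon_sub_prodset I d x : D d -> d != 0 -> (forall i, I i -> D (d * i)) ->
  colon T I x -> prodset (colon D I) T x.
Proof.
move=> Dd d0 dI xTI; have [sT DT] := Th_overring ThT.
have xoT : prodset (colon others_meet I) T x.
  rewrite -[x](mulVKf d0) /=; apply: (prodset_mull (prodset_others_meet (d^-1 * x))).
  move=> a oa i Ii; rewrite mulrAC.
  by apply: (subringM others_meet_subring) => //; apply: sub_others_meet; apply: dI.
have := flat_prodsetI qfD (Th_flat ThT)
  (submodule_colon others_meet_subring I sub_others_meet) (submodule_colon sT I DT)
  xTI (subring1 sT).
rewrite mulr1 => /(_ xoT).
by apply: prodset_sub => // z [zoI zTI]; apply: colon_others_meetI.
Qed.

End JaffardFamily.

Theorem proposition3p2 (K : fieldType) (D T : K -> Prop) :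
  domain_with_qf D -> t_Jaffard_overring D T ->
  forall I : K -> Prop, fractional_ideal D I ->
  same_set (prodset (colon D I) T) (colon T (prodset I T)).
Proof.
move=> qfD [Th [[Th_overring [_ Th_flat Th_indep Th_locfin Th_meet]] ThT]].
move=> I [_ _ [d [Dd d0 dI]]] x; have [sT _] := Th_overring T ThT.
split; first exact: prodset_colon_sub (Th_overring T ThT) x.
move=> xITT; apply: (colon_sub_prodset qfD Th_overring Th_flat Th_indep Th_locfin
  (fun y => (Th_meet y).1) ThT Dd d0 dI).
by move=> i Ii; rewrite -[i]mulr1; apply/xITT/prodset_mul => //; apply: subring1.
Qed.
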